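(* Let $p\in(1,2)$ and $d=1$. Let $f:\Omega\times[0,T]\times\mathbb R\times\mathbb R^{k}\times(\mathbb L^1_\mu+\mathbb L^2_\mu)\to\mathbb R$ satisfy: (H1) for every $t,z,\psi$, $y\mapsto f(t,y,z,\psi)$ is continuous and $(f(t,y,z,\psi)-f(t,y',z,\psi))(y-y')\le\alpha|y-y'|^2$ for a constant $\alpha$; (H2) for every $r>0$, $(\omega,t)\mapsto\sup_{|y|\le r}|f(t,y,0,0)-f(t,0,0,0)|$ belongs to $L^1(\Omega\times[0,T],\mathbb P\otimes dt)$; (H3') $f$ is Lipschitz continuous in $z$ with constant $K$, and for each $(y,z,\psi,\phi)\in\mathbb R\times\mathbb R^k\times(\mathbb L^1_\mu+\mathbb L^2_\mu)^2$ there is a predictable process $\kappa=\kappa^{y,z,\psi,\phi}:\Omega\times[0,T]\times\mathcal U\to\mathbb R$ with $$f(t,y,z,\psi)-f(t,y,z,\phi)\le\int_{\mathcal U}(\psi(u)-\phi(u))\kappa^{y,z,\psi,\phi}_t(u)\mu(du),$$ and $\mathbb P\otimes\mathrm{Leb}\otimes\mu$-a.e., for all $(y,z,\psi,\phi)$: $-1\le\kappa^{y,z,\psi,\phi}_t(u)$ and $|\kappa^{y,z,\psi,\phi}_t(u)|\le\ell(u)$, where $\ell\in\mathbb L^\infty_\mu\cap\mathbb L^2_\mu$. Then $f$ satisfies (H1), (H2) and (H3): there exists a constant $K'$ such that for all $t,y$, all $z,z'\in\mathbb R^k$ and $\psi,\psi'\in\mathbb L^1_\mu+\mathbb L^2_\mu$,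 $$|f(t,y,z,\psi)-f(t,y,z',\psi')|\le K'\big(|z-z'|+\|\psi-\psi'\|_{\mathbb L^1_\mu+\mathbb L^2_\mu}\big);$$ in particular $f$ is Lipschitz continuous with respect to $\psi$.
   Context: $\mu$ is a $\sigma$-finite measure on $\mathcal U\subset\mathbb R^m\setminus\{0\}$ with $\int(1\wedge|u|^2)d\mu<\infty$; $(\Omega,\mathcal F,\mathbb P,\mathbb F)$ is a filtered probability space. For $q\ge1$, $\mathbb L^q_\mu$ is the set of measurable real functions on $\mathcal U$ with $\int|\phi|^qd\mu<\infty$, $\mathbb L^\infty_\mu$ the essentially bounded ones; $\|\phi\|_{\mathbb L^1_\mu+\mathbb L^2_\mu}=\inf\{\|\phi^1\|_{\mathbb L^1_\mu}+\|\phi^2\|_{\mathbb L^2_\mu}:\phi^1+\phi^2=\phi\}$ and $\mathbb L^1_\mu+\mathbb L^2_\mu$ is the space where this is finite; $\mathbb L^\infty_\mu\cap\mathbb L^2_\mu$ carries the norm $\max(\|\ell\|_{\mathbb L^\infty_\mu},\|\ell\|_{\mathbb L^2_\mu})$. *)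

From HB Require Import structures.
From mathcomp Require Import all_boot all_order all_algebra.
From mathcomp Require Import all_classical all_reals all_analysis.
Import Order.TTheory GRing.Theory Num.Theory.
Import numFieldNormedType.Exports.
Local Open Scope classical_set_scope.
Local Open Scope ring_scope.

Set Implicit Arguments.
Unset Strict Implicit.
Unset Printing Implicit Defensive.

(* Euclidean norm on R^k (row vectors) and squared Euclidean norm on R^m
   (m-tuples, which carry the Borel product sigma-algebra). *)
Definition eucl_rV (R : realType) (k : nat) (z : 'rV[R]_k) : R :=
  Num.sqrt (\sum_(i < k) z ord0 i ^+ 2).

Definition sqnorm_tuple (R : realType) (m : nat) (u : m.-tuple R) : R :=
  \sum_(i < m) tnth u i ^+ 2.

Definition zero_tuple (R : realType) (m : nat) : m.-tuple R :=
  [tuple (0 : R) | _ < m].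

Definition inLp (d : measure_display) (X : measurableType d) (R : realType)
  (mu : {measure set X -> \bar R}) (p : \bar R) (phi : X -> R) : Prop :=
  measurable_fun setT phi /\ ('N[mu]_p[EFin \o phi] < +oo)%E.

Definition L12norm (d : measure_display) (X : measurableType d) (R : realType)
  (mu : {measure set X -> \bar R}) (phi : X -> R) : \bar R :=
  ereal_inf [set x : \bar R | exists phi1 phi2 : X -> R,
     [/\ inLp mu 1%E phi1, inLp mu 2%:E phi2,
         (forall u, phi1 u + phi2 u = phi u) &
         x = ('N[mu]_1%E[EFin \o phi1] + 'N[mu]_2%:E[EFin \o phi2])%E]].

Definition inL12 (d : measure_display) (X : measurableType d) (R : realType)
  (mu : {measure set X -> \bar R}) (phi : X -> R) : Prop :=
  (L12norm mu phi < +oo)%E.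

Definition filtration (d : measure_display) (Omega : measurableType d)
  (R : realType) (T : R) (F : R -> set (set Omega)) : Prop :=
  (forall t, 0 <= t <= T -> sigma_algebra setT (F t) /\ F t `<=` measurable) /\
  (forall s t, 0 <= s -> s <= t -> t <= T -> F s `<=` F t).

Definition predictable_rects (d : measure_display) (Omega : measurableType d)
  (R : realType) (T : R) (F : R -> set (set Omega)) : set (set (Omega * R)) :=
  [set X | (exists s t (A : set Omega),
               [/\ 0 <= s, s < t, t <= T, F s A & X = A `*` `]s, t]])
        \/ (exists A : set Omega, F 0 A /\ X = A `*` [set 0])].

Definition predictable_U_rects (d : measure_display) (Omega : measurableType d)
  (R : realType) (m : nat) (T : R) (F : R -> set (set Omega))
  : set (set ((Omega * R) * m.-tuple R)) :=
  [set X | exists (A : set (Omega * R)) (B : set (m.-tuple R)),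
     [/\ <<s predictable_rects T F >> A, measurable B & X = A `*` B]].

Definition predictable_U (d : measure_display) (Omega : measurableType d)
  (R : realType) (m : nat) (T : R) (F : R -> set (set Omega))
  (kappa : Omega -> R -> m.-tuple R -> R) : Prop :=
  forall B : set R, measurable B ->
    <<s @predictable_U_rects d Omega R m T F >>
      (((setT `*` `[0, T]) `*` setT) `&`
        (fun x => kappa x.1.1 x.1.2 x.2) @^-1` B).

From HB Require Import structures.
From mathcomp Require Import all_boot all_order all_algebra.
From mathcomp Require Import all_classical all_reals all_analysis.
From mathcomp Require Import ess_sup_inf measurable_realfun lra.
Import Order.TTheory GRing.Theory Num.Theory.
Import numFieldNormedType.Exports.
Local Open Scope classical_set_scope.
Local Open Scope ring_scope.

Set Implicit Arguments.
Unset Strict Implicit.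
Unset Printing Implicit Defensive.

(* Fix (w, t, y, z) and write a - b = phi1 + phi2 with phi1 in L^1 and phi2 in L^2.
   The kernel representation (H3') and |kappa| <= ell give, by Hoelder,
     f(a) - f(b) <= \int (phi1 + phi2) kappa dmu
                 <= ||ell||_oo ||phi1||_1 + ||ell||_2 ||phi2||_2;
   taking the infimum over all decompositions, and exchanging a and b, bounds
   |f(a) - f(b)| by a multiple of ||a - b||_{L^1 + L^2}.  The bound |kappa| <= ell
   holds mu-a.e. for (P x dt)-a.e. (w, t) because a null set of a product measure has
   null sections almost everywhere.  (H3) then follows from the Lipschitz continuity
   in z and the triangle inequality; (H1) and (H2) are among the hypotheses. *)

Lemma ae_prod_xsection d1 d2 (T1 : measurableType d1) (T2 : measurableType d2)
    (R : realType) (m1 : {measure set T1 -> \bar R})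
    (m2 : {sigma_finite_measure set T2 -> \bar R}) (Q : T1 * T2 -> Prop) :
  {ae (m1 \x m2)%E, forall x, Q x} -> {ae m1, forall a, {ae m2, forall b, Q (a, b)}}.
Proof.
move=> [N [mN N0 sN]].
have : ae_eq m1 setT (m2 \o xsection N) (cst 0%E).
  apply/(ae_eq_integral_abs m1 measurableT); first exact: measurable_fun_xsection.
  rewrite -N0 /product_measure1; apply: eq_integral => x _.
  by rewrite gee0_abs.
apply: filterS => a /(_ I) /= Na0.
exists (xsection N a); split => //; first exact: measurable_xsection.
by move=> b /= nQ; apply/mem_set; exact: sN.
Qed.

Section predictable_sections.
Context d (Omega : measurableType d) (R : realType) (m : nat) (T : R)
  (F : R -> set (set Omega)).

Lemma predictable_U_measurable_section (A : set ((Omega * R) * m.-tuple R))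
    (x : Omega * R) :
  <<s predictable_U_rects T F >> A -> measurable [set u | A (x, u)].
Proof.
move=> /(_ [set B | measurable [set u | B (x, u)]]); apply; split; first split.
- exact: measurable0.
- by move=> B mB; exact: (@measurableD _ _ setT _ measurableT mB).
- by move=> B mB; exact: (@bigcupT_measurable _ _ (fun n => [set u | B n (x, u)]) mB).
move=> _ [A' [B [_ mB ->]]] /=.
have [A'x|A'x] := pselect (A' x).
  by rewrite [X in measurable X](_ : _ = B) //; apply/seteqP; split => u /=; [case|].
by rewrite [X in measurable X](_ : _ = set0) //; apply/seteqP; split => u /=; [case|].
Qed.

Lemma predictable_U_measurable_fun (kappa : Omega -> R -> m.-tuple R -> R) w t :
  predictable_U T F kappa -> 0 <= t <= T -> measurable_fun setT (kappa w t).
Proof.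
move=> pk t0T _ B mB; rewrite setTI.
have := predictable_U_measurable_section (w, t) (pk B mB).
by congr measurable; apply/seteqP; split => u /=; [case|].
Qed.

End predictable_sections.

Lemma lee_pmul_ereal_inf (R : realType) (S : set (\bar R)) (a : \bar R) (C : R) :
  0 < C -> (forall x, S x -> (a <= C%:E * x)%E) -> (a <= C%:E * ereal_inf S)%E.
Proof.
move=> C0 aS; rewrite -lee_pdivrMl //.
by apply: le_ereal_inf_tmp => x Sx; rewrite lee_pdivrMl //; exact: aS.
Qed.

Section Lnorm_facts.
Context d (X : measurableType d) (R : realType) (mu : {measure set X -> \bar R}).

Lemma Lnorm_fin_num p (phi : X -> R) :
  inLp mu p phi -> ('N[mu]_p[EFin \o phi])%E \is a fin_num.
Proof. by case=> _ fin; rewrite ge0_fin_numE ?Lnorm_ge0. Qed.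

Lemma LnormN p (phi : X -> R) :
  ('N[mu]_p[EFin \o (fun u => (- phi u)%R)] = 'N[mu]_p[EFin \o phi])%E.
Proof. by rewrite -(oppe_Lnorm _ (EFin \o phi)); apply: eq_Lnorm. Qed.

Lemma inLpN p (phi : X -> R) : inLp mu p phi -> inLp mu p (fun u => - phi u).
Proof.
case=> mphi fin; split; first exact: measurableT_comp.
by rewrite LnormN.
Qed.

Lemma L12norm_ge0 (phi : X -> R) : (0 <= L12norm mu phi)%E.
Proof.
by apply: le_ereal_inf_tmp => _ [phi1 [phi2 [_ _ _ ->]]]; rewrite adde_ge0 ?Lnorm_ge0.
Qed.

Lemma L12normN (phi : X -> R) : L12norm mu (fun u => - phi u) = L12norm mu phi.
Proof.
suff le_N psi : (L12norm mu psi <= L12norm mu (fun u => (- psi u)%R))%E.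
  apply/eqP; rewrite eq_le le_N andbT.
  by rewrite {2}(_ : phi = fun u => - - phi u) ?le_N //; apply/funext => u; rewrite opprK.
rewrite /L12norm; apply: le_ereal_inf => _ /= [phi1 [phi2 [L1 L2 sum ->]]].
exists (fun u => - phi1 u), (fun u => - phi2 u); split; try exact: inLpN.
  by move=> u; rewrite -opprD sum opprK.
by rewrite !LnormN.
Qed.

Lemma ae_abs_le_Lnorm_infty (ell : X -> R) :
  {ae mu, forall u, ((`|ell u|)%:E <= 'N[mu]_+oo[EFin \o ell])%E}.
Proof.
rewrite unlock /=; case: ifPn => [_|mu0].
  exact: (ess_sup_ge mu (abse \o (EFin \o ell))).
apply: measure0_ae; apply/eqP; rewrite eq_le measure_ge0 andbT leNgt.
exact: mu0.
Qed.

Lemma integral_abs_mul_le_Linfty_L1 (g ell : X -> R) :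
  measurable_fun setT g -> inLp mu +oo%E ell ->
  (\int[mu]_u (`|g u| * `|ell u|)%:E <=
     'N[mu]_+oo[EFin \o ell] * 'N[mu]_1[EFin \o g])%E.
Proof.
move=> mg ell_oo; have ell_fin := Lnorm_fin_num ell_oo; case: (ell_oo) => mell _.
set c := fine ('N[mu]_+oo[EFin \o ell])%E.
have c0 : 0 <= c by rewrite fine_ge0 ?Lnorm_ge0.
have mgE : measurable_fun setT (fun u => (`|g u|)%:E).
  by apply/measurable_EFinP; exact: measurableT_comp.
apply: (@le_trans _ _ (\int[mu]_u ((`|g u|)%:E * c%:E))%E).
  apply: (ae_ge0_le_integral measurableT).
  - by move=> u _; rewrite lee_fin mulr_ge0.
  - by apply/measurable_EFinP; apply: measurable_funM; exact: measurableT_comp.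
  - by move=> u _; rewrite mule_ge0.
  - by apply: emeasurable_funM => //; exact: measurable_cst.
  apply: filterS (ae_abs_le_Lnorm_infty ell) => u; rewrite -(fineK ell_fin) lee_fin.
  by move=> ell_le _; rewrite -EFinM lee_fin ler_wpM2l.
by rewrite ge0_integralZr ?lee_fin // fineK // muleC Lnorm1.
Qed.

Lemma integral_abs_mul_le_L2_L2 (g ell : X -> R) :
  measurable_fun setT g -> measurable_fun setT ell ->
  (\int[mu]_u (`|g u| * `|ell u|)%:E <=
     'N[mu]_2%:E[EFin \o ell] * 'N[mu]_2%:E[EFin \o g])%E.
Proof.
move=> mg mell.
have half : 2^-1 + 2^-1 = 1 :> R by rewrite [RHS](splitr 1) div1r.
have -> : (\int[mu]_u (`|g u| * `|ell u|)%:E = 'N[mu]_1[EFin \o (g \* ell)%R])%E.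
  by rewrite Lnorm1; apply: eq_integral => u _ /=; rewrite normrM.
by rewrite muleC; exact: (hoelder mu mg mell (ltr0Sn _ 1) (ltr0Sn _ 1) half).
Qed.

Lemma integral_le_Linfty_L1_L2 (U : set X) (h phi1 phi2 ell : X -> R) :
  measurable U -> inLp mu 1%E phi1 -> inLp mu 2%:E phi2 -> inLp mu +oo%E ell ->
  measurable_fun setT h ->
  {ae mu, forall u, `|h u| <= (`|phi1 u| + `|phi2 u|) * ell u} ->
  (\int[mu]_(u in U) (h u)%:E <=
     'N[mu]_+oo[EFin \o ell] * 'N[mu]_1[EFin \o phi1] +
     'N[mu]_2%:E[EFin \o ell] * 'N[mu]_2%:E[EFin \o phi2])%E.
Proof.
move=> mU [mphi1 _] [mphi2 _] ell_oo mh h_le; case: (ell_oo) => mell _.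
have mprod (g : X -> R) : measurable_fun setT g ->
    measurable_fun setT (fun u => (`|g u| * `|ell u|)%:E).
  by move=> mg; apply/measurable_EFinP; apply: measurable_funM; exact: measurableT_comp.
have mhE : measurable_fun setT (EFin \o h) by exact/measurable_EFinP.
apply: (le_trans (lee_abs _)).
apply: (le_trans (le_abse_integral mu mU (measurable_funS measurableT (@subsetT _ U) mhE))).
apply: (le_trans (ge0_subset_integral mu mU measurableT _ _ (@subsetT _ U))).
  - exact: measurableT_comp.
  - by move=> u _; exact: abse_ge0.
apply: (@le_trans _ _ (\int[mu]_u ((`|phi1 u| * `|ell u|)%:E +
                                   (`|phi2 u| * `|ell u|)%:E))%E).
  apply: (ae_ge0_le_integral measurableT).
  - by move=> u _; exact: abse_ge0.
  - exact: measurableT_comp.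
  - by move=> u _; rewrite -EFinD lee_fin addr_ge0 // mulr_ge0.
  - by apply: emeasurable_funD; exact: mprod.
  apply: filterS h_le => u hu _; rewrite abse_EFin -EFinD lee_fin -mulrDl.
  by apply: (le_trans hu); apply: ler_wpM2l; [rewrite addr_ge0|exact: ler_norm].
rewrite ge0_integralD //; try exact: mprod.
apply: leeD; first exact: integral_abs_mul_le_Linfty_L1.
exact: integral_abs_mul_le_L2_L2.
Qed.

End Lnorm_facts.

Section kernel_dominated.
Context d (X : measurableType d) (R : realType) (mu : {measure set X -> \bar R}).
Variables (U : set X) (ell : X -> R).
Hypotheses (mU : measurable U) (ell_oo : inLp mu +oo%E ell) (ell_2 : inLp mu 2%:E ell).

(* The [+ 1] makes the constant positive, so that it can be divided out of the
   infimum defining [L12norm]. *)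
Definition kernel_lipschitz_constant : R :=
  fine ('N[mu]_+oo[EFin \o ell])%E + fine ('N[mu]_2%:E[EFin \o ell])%E + 1.

Local Notation C := kernel_lipschitz_constant.

Lemma kernel_lipschitz_constant_gt0 : 0 < C.
Proof. by rewrite ltr_wpDl // addr_ge0 // fine_ge0 // Lnorm_ge0. Qed.

Lemma le_L12norm_of_kernel (v : R) (h kappa : X -> R) :
  measurable_fun setT kappa -> {ae mu, forall u, `|kappa u| <= ell u} ->
  (v%:E <= \int[mu]_(u in U) (h u * kappa u)%:E)%E ->
  (v%:E <= C%:E * L12norm mu h)%E.
Proof.
move=> mkappa kappa_le v_le.
apply: lee_pmul_ereal_inf => [|_ [phi1 [phi2 [L1 L2 sum ->]]]].
  exact: kernel_lipschitz_constant_gt0.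
have mh : measurable_fun setT h.
  rewrite (_ : h = fun u => phi1 u + phi2 u); last by apply/funext => u; rewrite sum.
  by apply: measurable_funD; [case: L1|case: L2].
have hk_le : {ae mu, forall u, `|h u * kappa u| <= (`|phi1 u| + `|phi2 u|) * ell u}.
  apply: filterS kappa_le => u kappa_le_u.
  by rewrite normrM -sum; apply: ler_pM => //; exact: ler_normD.
have := integral_le_Linfty_L1_L2 mU L1 L2 ell_oo (measurable_funM mh mkappa) hk_le.
move=> /(le_trans v_le)/le_trans; apply.
have [n_oo n_2] := (Lnorm_fin_num ell_oo, Lnorm_fin_num ell_2).
have [n_1 n_2'] := (Lnorm_fin_num L1, Lnorm_fin_num L2).
rewrite -(fineK n_oo) -(fineK n_2) -(fineK n_1) -(fineK n_2') -!EFinM -!EFinD lee_fin.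
have fine_Lnorm_ge0 p (phi : X -> R) : 0 <= fine ('N[mu]_p[EFin \o phi])%E.
  by rewrite fine_ge0 ?Lnorm_ge0.
have := fine_Lnorm_ge0 +oo%E ell; have := fine_Lnorm_ge0 2%:E ell.
have := fine_Lnorm_ge0 1%E phi1; have := fine_Lnorm_ge0 2%:E phi2.
rewrite /kernel_lipschitz_constant; nra.
Qed.

Lemma abs_le_L12norm_of_kernels (va vb : R) (a b kab kba : X -> R) :
  measurable_fun setT kab -> measurable_fun setT kba ->
  {ae mu, forall u, `|kab u| <= ell u} -> {ae mu, forall u, `|kba u| <= ell u} ->
  ((va - vb)%:E <= \int[mu]_(u in U) ((a u - b u) * kab u)%:E)%E ->
  ((vb - va)%:E <= \int[mu]_(u in U) ((b u - a u) * kba u)%:E)%E ->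
  ((`|va - vb|)%:E <= C%:E * L12norm mu (fun u => (a u - b u)%R))%E.
Proof.
move=> mab mba ab_le ba_le le_ab le_ba.
have [le0|lt0] := leP 0 (va - vb).
  by rewrite ger0_norm //; exact: le_L12norm_of_kernel le_ab.
rewrite ltr0_norm // opprB -L12normN.
rewrite (_ : (fun u => - (a u - b u)) = fun u => b u - a u).
  exact: le_L12norm_of_kernel le_ba.
by apply/funext => u; rewrite opprB.
Qed.

End kernel_dominated.

Theorem lemma4
  (R : realType) (p : R) (hp : 1 < p < 2) (T : R) (hT : 0 < T)
  (dO : measure_display) (Omega : measurableType dO)
  (P : probability Omega R) (F : R -> set (set Omega))
  (hF : filtration T F)
  (m k : nat) (U : set (m.-tuple R)) (mU : measurable U)
  (hU0 : ~ U (zero_tuple R m))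
  (mu : {sigma_finite_measure set (m.-tuple R) -> \bar R})
  (mu_on_U : mu (~` U) = 0%E)
  (levy : (\int[mu]_(u in U) (Num.min 1 (sqnorm_tuple u))%:E < +oo)%E)
  (f : Omega -> R -> R -> 'rV[R]_k -> (m.-tuple R -> R) -> R)
  (* (H1) *)
  (H1 : exists alpha : R, forall w t z psi, 0 <= t <= T -> inL12 mu psi ->
      continuous (fun y => f w t y z psi) /\
      forall y y', (f w t y z psi - f w t y' z psi) * (y - y') <= alpha * (y - y') ^+ 2)
  (* (H2) *)
  (H2 : forall r : R, 0 < r ->
      (P \x lebesgue_measure)%E.-integrable (setT `*` `[0, T])
        (fun x => ereal_sup [set (`|f x.1 x.2 y 0 (fun _ => 0) - f x.1 x.2 0 0 (fun _ => 0)|)%:E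
                            | y in [set y : R | `|y| <= r]]))
  (* (H3') *)
  (H3z : exists K : R, forall w t y z z' psi, 0 <= t <= T -> inL12 mu psi ->
      `|f w t y z psi - f w t y z' psi| <= K * eucl_rV (z - z'))
  (H3k : exists (ell : m.-tuple R -> R)
           (kappa : R -> 'rV[R]_k -> (m.-tuple R -> R) -> (m.-tuple R -> R) ->
                    Omega -> R -> m.-tuple R -> R),
      [/\ inLp mu +oo%E ell, inLp mu 2%:E ell,
          (forall y z psi phi, inL12 mu psi -> inL12 mu phi ->
             predictable_U T F (kappa y z psi phi) /\
             forall w t, 0 <= t <= T ->
               ((f w t y z psi - f w t y z phi)%:E <=
                \int[mu]_(u in U) ((psi u - phi u) * kappa y z psi phi w t u)%:E)%E) &
          {ae ((P \x lebesgue_measure) \x mu)%E,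
             forall x : (Omega * R) * m.-tuple R, 0 <= x.1.2 <= T ->
               forall y z psi phi, inL12 mu psi -> inL12 mu phi ->
                 -1 <= kappa y z psi phi x.1.1 x.1.2 x.2 /\
                 `|kappa y z psi phi x.1.1 x.1.2 x.2| <= ell x.2}]) :
  (* conclusion: (H1), (H2) and (H3) *)
  (exists alpha : R, forall w t z psi, 0 <= t <= T -> inL12 mu psi ->
      continuous (fun y => f w t y z psi) /\
      forall y y', (f w t y z psi - f w t y' z psi) * (y - y') <= alpha * (y - y') ^+ 2) /\
  (forall r : R, 0 < r ->
      (P \x lebesgue_measure)%E.-integrable (setT `*` `[0, T])
        (fun x => ereal_sup [set (`|f x.1 x.2 y 0 (fun _ => 0) - f x.1 x.2 0 0 (fun _ => 0)|)%:E
                            | y in [set y : R | `|y| <= r]])) /\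
  (exists K' : R,
      {ae (P \x lebesgue_measure)%E, forall x : Omega * R, 0 <= x.2 <= T ->
        forall y z z' psi psi', inL12 mu psi -> inL12 mu psi' ->
          ((`|f x.1 x.2 y z psi - f x.1 x.2 y z' psi'|)%:E <=
           K'%:E * ((eucl_rV (z - z'))%:E + L12norm mu (fun u => (psi u - psi' u)%R)))%E}).
Proof.
split; first exact: H1.
split; first exact: H2.
case: H3z => K HK; case: H3k => ell [kappa [ell_oo ell_2 kappa_int kappa_le]].
pose C := kernel_lipschitz_constant mu ell.
exists (`|K| + C).
apply: filterS (ae_prod_xsection kappa_le) => -[w t] /= kappa_le_wt t0T.
move=> y z z' psi psi' Lpsi Lpsi'.
have psi_lip a b : inL12 mu a -> inL12 mu b ->
    ((`|f w t y z' a - f w t y z' b|)%:E <= C%:E * L12norm mu (fun u => (a u - b u)%R))%E.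
  move=> La Lb; have [pab le_ab] := kappa_int y z' a b La Lb.
  have [pba le_ba] := kappa_int y z' b a Lb La.
  refine (abs_le_L12norm_of_kernels mU ell_oo ell_2 _ _ _ _ (le_ab w t t0T) (le_ba w t t0T)).
  - exact (predictable_U_measurable_fun w pab t0T).
  - exact (predictable_U_measurable_fun w pba t0T).
  - by apply: filterS kappa_le_wt => u /(_ t0T y z' a b La Lb) [].
  - by apply: filterS kappa_le_wt => u /(_ t0T y z' b a Lb La) [].
have e_ge0 : 0 <= eucl_rV (z - z') by exact: sqrtr_ge0.
have C_gt0 : 0 < C by exact: kernel_lipschitz_constant_gt0.
rewrite -(subrKA (f w t y z' psi)).
apply: (@le_trans _ _ ((`|f w t y z psi - f w t y z' psi|)%:E +
                       (`|f w t y z' psi - f w t y z' psi'|)%:E)%E).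
  by rewrite -EFinD lee_fin ler_normD.
rewrite ge0_muleDr ?L12norm_ge0 //; apply: leeD.
  rewrite -EFinM lee_fin; apply: le_trans (HK w t y z z' psi t0T Lpsi) _.
  by apply: ler_wpM2r => //; rewrite (le_trans (ler_norm K)) // lerDl ltW.
apply: le_trans (psi_lip _ _ Lpsi Lpsi') _.
by apply: lee_wpmul2r; rewrite ?L12norm_ge0 // lee_fin lerDr.
Qed.
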